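(* Let $\mathcal{NCP}$ be the noncrossing gap-insertion operad (defined in the context). For $n\geq 2$ let $p_n=\{[n-1]\}\in\mathcal{NCP}(n)$ be the one-block partition of $[n-1]$. Then the operad $\mathcal{NCP}$ is generated by the elements $p_n$, $n\geq 2$, subject to the relations $$p_m\diamond_m p_n=p_n\diamond_1 p_m\qquad\text{for all } m,n\geq 2.$$ That is, if $\mathcal{Q}$ denotes the quotient of the free non-symmetric set operad on generators $q_n$ of arity $n$ ($n\geq 2$) by the relations $q_m\circ_m q_n=q_n\circ_1 q_m$ ($m,n\geq 2$), then the operad morphism $\mathcal{Q}\to\mathcal{NCP}$ sending $q_n\mapsto p_n$ exists and is an isomorphism.
   Context: A partition of degree $n$ is a set partition of $[n]=\{1,\dots,n\}$ into nonempty blocks (for $n=0$ there is only the empty partition $\emptyset$); partitions of other finite linearly ordered sets are identified with partitions of $[n]$ via the unique order-preserving bijection. A partition is noncrossing if there are no $a<c<b<d$ with $a,b$ in one block and $c,d$ in a different block. The noncrossing gap-insertion operad $\mathcal{NCP}$ is the non-symmetric set operad with $\mathcal{NCP}(0)=\emptyset$ and, for $n\geq 1$, $\mathcal{NCP}(n)$ the set of noncrossing partitions of $[n-1]$ (so a partition of degree $n-1$ has arity $n$, its inputs being the $n$ gaps before, between and after its elements; $\mathcal{NCP}(1)=\{\emptyset\}$ and $\emptyset$ is the unit). The partial composition, for $P=\{\pi_1,\dots,\pi_k\}\in\mathcal{NCP}(m)$, $Q=\{\rho_1,\dots,\rho_l\}\in\mathcal{NCP}(n)$ and $i\in[m]$,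 is $$P\diamond_i Q=\{\chi(\pi_1),\dots,\chi(\pi_k),\rho_1+i-1,\dots,\rho_l+i-1\},$$ where $\chi(p)=p$ if $p<i$ and $\chi(p)=p+n-1$ otherwise (applied elementwise), and $X+c$ denotes the shift of a set $X$ by $c$. (That is, $Q$ is inserted into the $i$-th gap of $P$.) *)

From HB Require Import structures.
From mathcomp Require Import all_boot.
From mathcomp Require Import finmap.

Set Implicit Arguments.
Unset Strict Implicit.
Unset Printing Implicit Defensive.

Local Open Scope fset_scope.

Definition partition_set := {fset {fset nat}}.

Definition is_partition (k : nat) (P : partition_set) : Prop :=
  [/\ (forall B, B \in P -> B != fset0),
      (forall B C, B \in P -> C \in P -> B != C -> B `&` C = fset0) &
      (forall x, (exists2 B, B \in P & x \in B) <-> (1 <= x <= k))].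

Definition noncrossing (P : partition_set) : Prop :=
  forall B C a b c d, B \in P -> C \in P -> B != C ->
    a \in B -> b \in B -> c \in C -> d \in C ->
    ~~ [&& a < c, c < b & b < d].

Definition NCP (n : nat) (P : partition_set) : Prop :=
  [/\ 1 <= n, is_partition n.-1 P & noncrossing P].

(* Partial composition P <>_i Q, for P in NCP(m), Q in NCP(n), i in [m]
   (the value does not depend on m). *)
Definition ncomp (i n : nat) (P Q : partition_set) : partition_set :=
  [fset [fset (if p < i then p else (p + n - 1)%N) | p : nat in B] | B : {fset nat} in P]
  `|` [fset [fset (r + i - 1)%N | r : nat in B] | B : {fset nat} in Q].

Definition pgen (n : nat) : partition_set := [fset [fset x | x : nat in iota 1 n.-1]].

(* The free non-symmetric set operad on generators q_n of arity n>=2:  *)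
(* planar rooted trees whose internal vertices have >= 2 children; a    *)
(* vertex with n children is labelled by the unique generator q_n.      *)
(* The leaf is the operad unit.                                         *)

Inductive tree : Type :=
| Leaf : tree
| Node : seq tree -> tree.

Fixpoint arity (t : tree) : nat :=
  match t with
  | Leaf => 1
  | Node ts => sumn (map arity ts)
  end.

Fixpoint wf (t : tree) : bool :=
  match t with
  | Leaf => true
  | Node ts => (2 <= size ts) && all wf ts
  end.

Definition corolla (n : nat) : tree := Node (nseq n Leaf).

(* partial composition t o_{j+1} s : graft s on the (0-based) j-th leaf of t *)
Fixpoint graft (t : tree) (j : nat) (s : tree) : tree :=
  match t with
  | Leaf => if j == 0 then s else Leaf
  | Node ts =>
      Node ((fix go (us : seq tree) (j : nat) : seq tree :=
               match us with
               | [::] => [::]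
               | u :: us' =>
                   if j < arity u then graft u j s :: us'
                   else u :: go us' (j - arity u)
               end) ts j)
  end.

Inductive treq : tree -> tree -> Prop :=
| treq_refl t : treq t t
| treq_sym t t' : treq t t' -> treq t' t
| treq_trans t u v : treq t u -> treq u v -> treq t v
| treq_rel m n : 2 <= m -> 2 <= n ->
    treq (graft (corolla m) m.-1 (corolla n)) (graft (corolla n) 0 (corolla m))
| treq_graft t t' s s' j : j < arity t -> treq t t' -> treq s s' ->
    treq (graft t j s) (graft t' j s').

(* The morphism from the free operad to NCP sending q_n to p_n:
   Node [t_1;...;t_k] |-> p_k o (eval t_1, ..., eval t_k), computed by
   successive partial compositions, left to right. *)
Fixpoint eval (t : tree) : partition_set :=
  match t with
  | Leaf => fset0
  | Node ts =>
      (fix go (us : seq tree) (pos : nat) (X : partition_set) : partition_set :=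
         match us with
         | [::] => X
         | u :: us' => go us' (pos + arity u)%N (ncomp pos (arity u) X (eval u))
         end) ts 1 (pgen (size ts))
  end.

(* Reading a planar tree as a composite of corollas, [eval] sends it to the
   partition [tree_part t 0] in which each internal vertex contributes the block
   of gaps separating its subtrees.  The relation rotates [q_m o_m q_n] into
   [q_n o_1 q_m]; rotating repeatedly, every tree is equivalent to a normal form
   in which each internal vertex has a leaf as its first child.  For a normal
   form the block of the least element [s] is the root block, and the children
   fill the intervals between its consecutive elements.  Conversely a
   noncrossing partition splits at the successor [r] of [s] in its block into
   noncrossing partitions of ]s, r[ and of [r, e[ (with [s] removed from its
   block), so by induction normal forms correspond bijectively to noncrossing
   partitions.  Hence the induced map on the quotient is bijective. *)

From HB Require Import structures.
From mathcomp Require Import all_boot.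
From mathcomp Require Import finmap.
From mathcomp Require Import zify.

Set Implicit Arguments.
Unset Strict Implicit.
Unset Printing Implicit Defensive.

Local Open Scope fset_scope.
Local Open Scope nat_scope.

Fixpoint all_prop (P : tree -> Prop) (ts : seq tree) : Prop :=
  if ts is t :: ts' then P t /\ all_prop P ts' else True.

Definition tree_nested_ind (P : tree -> Prop) (P_Leaf : P Leaf)
    (P_Node : forall ts, all_prop P ts -> P (Node ts)) : forall t, P t :=
  fix F t := if t is Node ts then
    P_Node ts ((fix G ts : all_prop P ts :=
                  if ts is u :: us then conj (F u) (G us) else I) ts)
  else P_Leaf.

Definition arity_seq (ts : seq tree) : nat := sumn (map arity ts).

Lemma arity_Node ts : arity (Node ts) = arity_seq ts. Proof. by []. Qed.

Lemma arity_seq_cons t ts : arity_seq (t :: ts) = arity t + arity_seq ts.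
Proof. by []. Qed.

Lemma arity_seq_cat ts us : arity_seq (ts ++ us) = arity_seq ts + arity_seq us.
Proof. by rewrite /arity_seq map_cat sumn_cat. Qed.

Lemma arity_seq_rcons ts t : arity_seq (rcons ts t) = arity_seq ts + arity t.
Proof. by rewrite -cats1 arity_seq_cat arity_seq_cons addn0. Qed.

Lemma arity_seq_nseq_Leaf k : arity_seq (nseq k Leaf) = k.
Proof. by elim: k => //= k IH; rewrite arity_seq_cons IH. Qed.

Lemma arity_corolla k : arity (corolla k) = k.
Proof. exact: arity_seq_nseq_Leaf. Qed.

Lemma wf_Node ts : wf (Node ts) = (1 < size ts) && all wf ts.
Proof. by []. Qed.

Lemma wf_corolla k : 2 <= k -> wf (corolla k).
Proof. by move=> k2; rewrite /= size_nseq k2; elim: k {k2}. Qed.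

Lemma arity_gt0 t : wf t -> 0 < arity t.
Proof.
elim/tree_nested_ind: t => [|ts IH] //= /andP[size_ts wf_ts].
case: ts size_ts wf_ts IH => [|u us] //= _ /andP[wf_u _] [IHu _].
by rewrite addn_gt0 IHu.
Qed.

Lemma arity_Node_gt1 ts : wf (Node ts) -> 1 < arity (Node ts).
Proof.
case: ts => [|u [|v us]] //= /and3P[wf_u wf_v _].
by have := arity_gt0 wf_u; have := arity_gt0 wf_v; lia.
Qed.

Section GraftSeq.
Variable s : tree.

Fixpoint graft_seq (us : seq tree) (j : nat) : seq tree :=
  if us is u :: us' then
    if j < arity u then graft u j s :: us' else u :: graft_seq us' (j - arity u)
  else [::].

Lemma graft_Node ts j : graft (Node ts) j s = Node (graft_seq ts j).
Proof. by []. Qed.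

Lemma size_graft_seq ts j : size (graft_seq ts j) = size ts.
Proof. by elim: ts j => [|u us IH] j //=; case: ifP => //= _; rewrite IH. Qed.

Lemma graft_cat pre u post j : j < arity u ->
  graft (Node (pre ++ u :: post)) (arity_seq pre + j) s = Node (pre ++ graft u j s :: post).
Proof.
move=> j_lt; rewrite graft_Node; congr Node.
elim: pre => [|v pre IH] /=; first by rewrite j_lt.
by rewrite arity_seq_cons -addnA ltnNge leq_addr /= addKn IH.
Qed.

Lemma graft_Leaf_cat pre post :
  graft (Node (pre ++ Leaf :: post)) (arity_seq pre) s = Node (pre ++ s :: post).
Proof. by rewrite -[arity_seq pre]addn0 graft_cat. Qed.

Lemma graft_head u us j : j < arity u ->
  graft (Node (u :: us)) j s = Node (graft u j s :: us).
Proof. by move=> j_lt; rewrite -[j]add0n (graft_cat [::]). Qed.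

Lemma arity_graft t j : j < arity t -> arity (graft t j s) + 1 = arity t + arity s.
Proof.
elim/tree_nested_ind: t j => [|ts IH] j; first by case: j => // _; rewrite addnC.
rewrite graft_Node !arity_Node.
elim: ts j IH => [|u us IHus] j //= [IHu IHs] j_lt.
rewrite /arity_seq /=; case: ifP => j_u /=; first by have := IHu j j_u; lia.
by have := IHus (j - arity u) IHs; move: j_lt j_u; rewrite /arity_seq /=; lia.
Qed.

Lemma wf_graft t j : j < arity t -> wf (graft t j s) = wf t && wf s.
Proof.
elim/tree_nested_ind: t j => [|ts IH] j; first by case: j.
rewrite graft_Node /= size_graft_seq => j_lt.
case: (2 <= size ts) => //=.
elim: ts j IH j_lt => [|u us IHus] j //= [IHu IHs] j_lt.
case: ifP => j_u /=; first by rewrite IHu // -!andbA; do !bool_congr.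
rewrite IHus //; last by move: j_lt j_u; rewrite /arity_seq /=; lia.
by rewrite -!andbA; do !bool_congr.
Qed.

End GraftSeq.

(** * The partition of a tree *)

(* Element [k] of a partition of degree [n-1] is the gap between inputs [k] and
   [k+1].  The root of [Node ts] joins the gaps separating consecutive subtrees,
   and [tree_part t o] is the partition of [t] with all elements shifted by [o]. *)
Fixpoint seams (ts : seq tree) (o : nat) : seq nat :=
  if ts is u :: us then
    if us is [::] then [::] else (o + arity u) :: seams us (o + arity u)
  else [::].

Definition block (l : seq nat) : {fset nat} := [fset x | x : nat in l].

Fixpoint tree_part (t : tree) (o : nat) : partition_set :=
  if t is Node ts then
    [fset block (seams ts o)] `|`
    (fix forest us o := if us is u :: us' then
                          tree_part u o `|` forest us' (o + arity u)
                        else fset0) ts o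
  else fset0.

Fixpoint forest_part (us : seq tree) (o : nat) : partition_set :=
  if us is u :: us' then tree_part u o `|` forest_part us' (o + arity u) else fset0.

Lemma tree_part_Node ts o :
  tree_part (Node ts) o = [fset block (seams ts o)] `|` forest_part ts o.
Proof. by []. Qed.

Lemma seams_cons u us o : us <> [::] ->
  seams (u :: us) o = (o + arity u) :: seams us (o + arity u).
Proof. by case: us. Qed.

Lemma in_block l x : (x \in block l) = (x \in l).
Proof. by rewrite inE. Qed.

Lemma block_cons x l : block (x :: l) = x |` block l.
Proof. by apply/fsetP => y; rewrite in_fset1U !in_block inE. Qed.

Lemma block1 x : block [:: x] = [fset x].
Proof. by apply/fsetP => y; rewrite in_fset1 in_block inE. Qed.

Definition imblock (f : nat -> nat) (B : {fset nat}) : {fset nat} := [fset f x | x in B].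
Definition impart (f : nat -> nat) (P : partition_set) : partition_set :=
  [fset imblock f B | B in P].

Lemma impart0 f : impart f fset0 = fset0.
Proof. by apply/fsetP => C; rewrite in_fset0; apply/imfsetP => -[D]; rewrite in_fset0. Qed.

Lemma impart1 f B : impart f [fset B] = [fset imblock f B].
Proof.
apply/fsetP => C; rewrite in_fset1; apply/imfsetP/eqP => [[D]|->].
  by rewrite in_fset1 => /eqP -> ->.
by exists B; rewrite ?in_fset1.
Qed.

Lemma impartU f P Q : impart f (P `|` Q) = impart f P `|` impart f Q.
Proof.
apply/fsetP => B; rewrite in_fsetU; apply/imfsetP/orP.
  by move=> [C]; rewrite in_fsetU => /orP[] C_in ->; [left|right]; apply/imfsetP; exists C.
by move=> [] /imfsetP[C C_in ->]; exists C; rewrite // in_fsetU C_in ?orbT.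
Qed.

Lemma imblock_block f l : imblock f (block l) = block (map f l).
Proof.
apply/fsetP => x; rewrite in_block; apply/imfsetP/mapP => [[y]|[y y_in ->]].
  by rewrite in_block => y_in ->; exists y.
by exists y; rewrite ?in_block.
Qed.

Lemma eq_in_imblock f g (B : {fset nat}) : {in B, f =1 g} -> imblock f B = imblock g B.
Proof.
by move=> fg; apply/fsetP => y; apply/imfsetP/imfsetP => -[x x_in ->];
  exists x; rewrite ?fg.
Qed.

Lemma imblock_id_in f (B : {fset nat}) : {in B, f =1 id} -> imblock f B = B.
Proof.
move=> f_id; apply/fsetP => y; apply/imfsetP/idP => [[x x_in ->]|y_in].
  by rewrite f_id.
by exists y; rewrite ?f_id.
Qed.

Lemma eq_in_impart f g (P : partition_set) :
  (forall B, B \in P -> {in B, f =1 g}) -> impart f P = impart g P.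
Proof.
move=> fg; apply/fsetP => C; apply/imfsetP/imfsetP => -[B B_in ->]; exists B => //.
  exact/eq_in_imblock/fg.
by apply/esym/eq_in_imblock/fg.
Qed.

Lemma impart_id_in f (P : partition_set) : (forall B, B \in P -> {in B, f =1 id}) -> impart f P = P.
Proof.
move=> f_id; apply/fsetP => C; apply/imfsetP/idP => [[B B_in ->]|C_in].
  by rewrite imblock_id_in // => x; apply: f_id.
by exists C; rewrite // imblock_id_in // => x; apply: f_id.
Qed.

Lemma seams_shift ts o c : seams ts (o + c) = map (addn^~ c) (seams ts o).
Proof.
elim: ts o => [|u [|v w] IH] o //.
by rewrite !(seams_cons u) // addnAC IH.
Qed.

Lemma tree_part_shift t o c : tree_part t (o + c) = impart (addn^~ c) (tree_part t o).
Proof.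
elim/tree_nested_ind: t o => [|ts IH] o; first by rewrite impart0.
rewrite !tree_part_Node impartU impart1 imblock_block -seams_shift; congr (_ `|` _).
elim: ts o IH => [|u us IHus] o /= ; first by rewrite impart0.
by move=> [IHu IHs]; rewrite impartU IHu addnAC IHus.
Qed.

Lemma forest_part_shift ts o c :
  forest_part ts (o + c) = impart (addn^~ c) (forest_part ts o).
Proof.
elim: ts o => [|u us IH] o /=; first by rewrite impart0.
by rewrite impartU tree_part_shift addnAC IH.
Qed.

Lemma seams_range ts o x : all wf ts -> x \in seams ts o -> o < x < o + arity_seq ts.
Proof.
elim: ts o => [|u [|v w] IH] o //= /andP[wf_u wf_vw].
have := arity_gt0 wf_u; rewrite inE => u_gt0 /orP[/eqP ->|x_in].
  by move: wf_vw => /andP[/arity_gt0 v_gt0 _]; rewrite /arity_seq /=; lia.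
by have := IH _ wf_vw x_in; rewrite /arity_seq /=; lia.
Qed.

Lemma tree_part_range t o B : wf t -> B \in tree_part t o ->
  B != fset0 /\ {in B, forall x, o < x < o + arity t}.
Proof.
elim/tree_nested_ind: t o B => [|ts IH] o B; first by rewrite in_fset0.
move=> /andP[size_ts wf_ts]; rewrite tree_part_Node in_fsetU in_fset1.
case/orP => [/eqP ->|].
  split; last by move=> x; rewrite in_block; apply: seams_range.
  case: ts size_ts {wf_ts IH} => [|u [|v w]] //= _.
  by apply/fset0Pn; exists (o + arity u); rewrite in_block inE eqxx.
rewrite arity_Node.
elim: ts o IH {size_ts} wf_ts => [|u us IHus] o; first by rewrite in_fset0.
move=> [IHu IHs] /= /andP[wf_u wf_us]; have := arity_gt0 wf_u.
rewrite arity_seq_cons in_fsetU => u_gt0 /orP[B_in|B_in].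
  by have [B_n0 B_range] := IHu o B wf_u B_in; split => // x /B_range; lia.
by have [B_n0 B_range] := IHus _ IHs wf_us B_in; split => // x /B_range; lia.
Qed.

Lemma forest_part_range ts o B : all wf ts -> B \in forest_part ts o ->
  B != fset0 /\ {in B, forall x, o < x < o + arity_seq ts}.
Proof.
elim: ts o => [|u us IH] o; first by rewrite in_fset0.
move=> /andP[wf_u wf_us]; have := arity_gt0 wf_u.
rewrite /= arity_seq_cons in_fsetU => u_gt0 /orP[B_in|B_in].
  by have [B_n0 B_range] := tree_part_range wf_u B_in; split => // x /B_range; lia.
by have [B_n0 B_range] := IH _ wf_us B_in; split => // x /B_range; lia.
Qed.

Definition bump_from (i n p : nat) : nat := if p < i then p else p + n - 1.

Lemma ncompE i n P Q :
  ncomp i n P Q = impart (bump_from i n) P `|` impart (fun r => r + i - 1) Q.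
Proof. by []. Qed.

Section GraftPart.
Variable s : tree.
Hypothesis wf_s : wf s.
Let n := arity s.
Let n_gt0 : 0 < n := arity_gt0 wf_s.

Lemma seams_graft ts o j : all wf ts -> j < arity_seq ts ->
  seams (graft_seq s ts j) o = map (bump_from (o + j + 1) n) (seams ts o).
Proof.
elim: ts o j => [|u us IH] o j //; rewrite [all _ _]/= => /andP[wf_u wf_us] j_lt.
have u_gt0 := arity_gt0 wf_u.
rewrite [graft_seq _ _ _]/=; case: ifP => j_u.
  case: us IH wf_us j_lt => [|v w] IH wf_vw j_lt //.
  have := arity_graft s j_u; rewrite -/n => arity_u'.
  rewrite (seams_cons (graft u j s)) // (seams_cons u) // map_cons.
  rewrite {1}/bump_from ifF; last by lia.
  have -> : o + arity (graft u j s) = o + arity u + (n - 1) by lia.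
  rewrite seams_shift; congr (_ :: _); first by lia.
  apply/eq_in_map => x /(seams_range wf_vw); rewrite /bump_from; case: ifP; lia.
have us_n0 : us <> [::] by case: us {IH} j_lt wf_us => //=; rewrite /arity_seq /=; lia.
have us'_n0 : graft_seq s us (j - arity u) <> [::].
  by case: us us_n0 {IH j_lt wf_us} => //= v w _; case: ifP.
rewrite !(seams_cons u) // map_cons {1}/bump_from ifT; last by lia.
rewrite IH //; last by move: j_lt j_u; rewrite arity_seq_cons; lia.
by have -> : o + arity u + (j - arity u) + 1 = o + j + 1 by lia.
Qed.

Lemma tree_part_graft t o j : wf t -> j < arity t ->
  tree_part (graft t j s) o =
  impart (bump_from (o + j + 1) n) (tree_part t o) `|` tree_part s (o + j).
Proof.
elim/tree_nested_ind: t o j => [|ts IH] o j.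
  by case: j => // _ _; rewrite impart0 fset0U addn0.
rewrite wf_Node => /andP[_ wf_ts] j_lt.
rewrite graft_Node !tree_part_Node impartU impart1 imblock_block seams_graft //.
rewrite -fsetUA; congr (_ `|` _).
elim: ts o j IH wf_ts j_lt => [|u us IHus] o j // [IHu IHs].
rewrite [all _ _]/= => /andP[wf_u wf_us] j_lt /=.
have u_gt0 := arity_gt0 wf_u.
rewrite impartU; case: ifP => j_u /=.
  rewrite IHu // fsetUAC; congr (_ `|` _).
  have := arity_graft s j_u; rewrite -/n => arity_u'.
  have -> : o + arity (graft u j s) = o + arity u + (n - 1) by lia.
  rewrite forest_part_shift; congr (_ `|` _); apply: eq_in_impart => B B_in x x_in.
  have [_ /(_ x x_in)] := forest_part_range wf_us B_in.
  by rewrite /bump_from; case: ifP; lia.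
rewrite (@impart_id_in _ (tree_part u o)) => [|B B_in x x_in]; last first.
  have [_ /(_ x x_in)] := tree_part_range wf_u B_in.
  by rewrite /bump_from; case: ifP; lia.
rewrite -fsetUA IHus //; last by move: j_lt j_u; rewrite !arity_Node arity_seq_cons; lia.
by have -> : o + arity u + (j - arity u) = o + j by lia.
Qed.

End GraftPart.

Fixpoint eval_seq (us : seq tree) (pos : nat) (X : partition_set) : partition_set :=
  if us is u :: us' then eval_seq us' (pos + arity u) (ncomp pos (arity u) X (eval u))
  else X.

Lemma eval_Node ts : eval (Node ts) = eval_seq ts 1 (pgen (size ts)).
Proof. by []. Qed.

Lemma eval_seq_cons u us pos X :
  eval_seq (u :: us) pos X = eval_seq us (pos + arity u) (ncomp pos (arity u) X (eval u)).
Proof. by []. Qed.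

Lemma pgen_tree_part k : pgen k = tree_part (corolla k) 0.
Proof.
have seams_Leaf o : seams (nseq k Leaf) o = iota o.+1 k.-1.
  elim: k o => [|[|k] IH] o //.
  by rewrite [nseq _ _]/= (seams_cons Leaf) // IH addn1.
have forest_Leaf o : forest_part (nseq k Leaf) o = fset0.
  by elim: k {seams_Leaf} o => [|k IH] o //=; rewrite IH fset0U.
by rewrite tree_part_Node forest_Leaf fsetU0 seams_Leaf.
Qed.

(* Invariant of the left-to-right evaluation of [Node (pre ++ us)]: the
   children [pre] have already been grafted into the corolla. *)
Lemma eval_seq_tree_part us pre :
  all wf pre -> all wf us -> all_prop (fun u => eval u = tree_part u 0) us ->
  2 <= size pre + size us ->
  eval_seq us (1 + arity_seq pre) (tree_part (Node (pre ++ nseq (size us) Leaf)) 0)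
  = tree_part (Node (pre ++ us)) 0.
Proof.
elim: us pre => [|u us IH] pre wf_pre; first by rewrite cats0.
rewrite [all _ _]/= [all_prop _ _]/= => /andP[wf_u wf_us] [eval_u eval_us].
rewrite [size (u :: us)]/= => size2.
have wf_node : wf (Node (pre ++ Leaf :: nseq (size us) Leaf)).
  rewrite wf_Node size_cat /= size_nseq all_cat wf_pre /=.
  by rewrite (_ : all wf _) ?andbT; [lia | elim: (size us)].
have shift_u : impart (fun r => r + (1 + arity_seq pre) - 1) (tree_part u 0) =
               tree_part u (0 + arity_seq pre).
  by rewrite tree_part_shift; apply: eq_in_impart => B _ x _ /=; lia.
rewrite [nseq _ _]/= eval_seq_cons ncompE eval_u shift_u.
rewrite (_ : 1 + arity_seq pre = 0 + arity_seq pre + 1); last by lia.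
rewrite -tree_part_graft //; last first.
  by rewrite arity_Node arity_seq_cat arity_seq_cons /=; lia.
rewrite add0n graft_Leaf_cat -!cat_rcons.
have -> : arity_seq pre + 1 + arity u = 1 + arity_seq (rcons pre u).
  by rewrite arity_seq_rcons; lia.
apply: IH => //; first by rewrite -cats1 all_cat wf_pre /= wf_u.
by rewrite size_rcons; lia.
Qed.

Lemma eval_tree_part t : wf t -> eval t = tree_part t 0.
Proof.
elim/tree_nested_ind: t => [|ts IH] // /andP[size_ts wf_ts].
rewrite eval_Node pgen_tree_part.
have := @eval_seq_tree_part ts [::] isT wf_ts; rewrite /= add0n => -> //.
by elim: ts IH wf_ts {size_ts} => //= u us IHus [IHu IHs] /andP[wf_u wf_us]; split; auto.
Qed.

Lemma eval_graft t s j : wf t -> wf s -> j < arity t ->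
  eval (graft t j s) = ncomp j.+1 (arity s) (eval t) (eval s).
Proof.
move=> wf_t wf_s j_lt.
rewrite !eval_tree_part ?wf_graft ?wf_t //.
rewrite tree_part_graft // ncompE add0n addn1; congr (_ `|` _).
rewrite -[j]add0n tree_part_shift; apply: eq_in_impart => B _ x _ /=; lia.
Qed.

Lemma eval_corolla k : 2 <= k -> eval (corolla k) = pgen k.
Proof. by move=> k2; rewrite eval_tree_part ?wf_corolla // pgen_tree_part. Qed.

Lemma treq_arity_wf t t' : treq t t' -> arity t = arity t' /\ wf t = wf t'.
Proof.
elim=> {t t'} [t|t t' _ [-> ->]|t u v _ [-> ->] _ [-> ->]| m n m2 n2 |] //.
  have m_lt : m.-1 < arity (corolla m) by rewrite arity_corolla; lia.
  have n_gt0 : 0 < arity (corolla n) by rewrite arity_corolla; lia.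
  have := arity_graft (corolla n) m_lt; have := arity_graft (corolla m) n_gt0.
  rewrite !arity_corolla !wf_graft // !wf_corolla //; lia.
move=> t t' s s' j j_lt _ [arity_t wf_t] _ [arity_s wf_s].
have j_lt' : j < arity t' by rewrite -arity_t.
have := arity_graft s j_lt; have := arity_graft s' j_lt'.
by rewrite !wf_graft // wf_t wf_s; lia.
Qed.

Lemma eval_treq t t' : treq t t' -> wf t -> eval t = eval t'.
Proof.
elim=> {t t'} [//|t t' t_t' IH wf_t'|t u v t_u IHtu _ IHuv wf_t| m n m2 n2 _|].
- by rewrite IH // (treq_arity_wf t_t').2.
- by rewrite IHtu // IHuv // -(treq_arity_wf t_u).2.
- have m_lt : m.-1 < arity (corolla m) by rewrite arity_corolla; lia.
  have n_gt0 : 0 < arity (corolla n) by rewrite arity_corolla; lia.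
  rewrite !eval_graft ?wf_corolla // !eval_corolla // !arity_corolla !ncompE.
  rewrite prednK ?(ltnW m2) // fsetUC /pgen !impart1.
  by congr (_ `|` _); congr fset1; apply: eq_in_imblock => x;
    rewrite in_block mem_iota /bump_from; case: ifP; lia.
move=> t t' s s' j j_lt t_t' IHt s_s' IHs.
rewrite wf_graft // => /andP[wf_t wf_s].
have [arity_t wf_t'] := treq_arity_wf t_t'; have [arity_s wf_s'] := treq_arity_wf s_s'.
have j_lt' : j < arity t' by rewrite -arity_t.
by rewrite !eval_graft // -?wf_t' -?wf_s' // IHt // IHs // arity_s.
Qed.

(** * Normal forms *)

Definition is_node (t : tree) : bool := if t is Node _ then true else false.

Fixpoint nf (t : tree) : bool :=
  match t with
  | Leaf => true
  | Node ts => if ts is Leaf :: ((_ :: _) as cs) then all nf cs else false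
  end.

Lemma nf_Node_Leaf cs : cs <> [::] -> nf (Node (Leaf :: cs)) = all nf cs.
Proof. by case: cs. Qed.

Lemma nf_NodeP ts : nf (Node ts) -> exists cs, [/\ ts = Leaf :: cs, cs <> [::] & all nf cs].
Proof. by case: ts => [|[|u] [|v w]] //= nf_vw; exists (v :: w). Qed.

Lemma wf_Node_Leaf cs : cs <> [::] -> wf (Node (Leaf :: cs)) = all wf cs.
Proof. by case: cs. Qed.

(* The two sides of the relation [q_m o_m q_n = q_n o_1 q_m], with arbitrary
   trees in place of the leaves of [q_m] and [q_n]. *)
Definition nest_last (xs : seq tree) (y : tree) (ys : seq tree) : tree :=
  Node (rcons xs (Node (y :: ys))).
Definition nest_first (xs : seq tree) (y : tree) (ys : seq tree) : tree :=
  Node (Node (rcons xs y) :: ys).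

Lemma rcons_nseq_Leaf k : rcons (nseq k Leaf) Leaf = nseq k.+1 Leaf.
Proof. by elim: k => //= k ->. Qed.

Lemma nest_last_corolla m n :
  nest_last (nseq m Leaf) Leaf (nseq n Leaf) = graft (corolla m.+1) m (corolla n.+1).
Proof.
rewrite /corolla -rcons_nseq_Leaf -cats1.
by rewrite -[X in graft _ X](arity_seq_nseq_Leaf m) graft_Leaf_cat cats1.
Qed.

Lemma nest_first_corolla m n :
  nest_first (nseq m Leaf) Leaf (nseq n Leaf) = graft (corolla n.+1) 0 (corolla m.+1).
Proof. by rewrite /nest_first rcons_nseq_Leaf (graft_Leaf_cat _ [::]). Qed.

Lemma arity_nest_last xs y ys : arity (nest_last xs y ys) = arity_seq xs + arity y + arity_seq ys.
Proof. by rewrite arity_Node arity_seq_rcons arity_Node arity_seq_cons addnA. Qed.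

Section GraftNest.
Variables (s : tree) (y : tree) (xs ys pre post : seq tree).

Lemma graft_nest_last_xs :
  graft (nest_last (pre ++ Leaf :: post) y ys) (arity_seq pre) s =
  nest_last (pre ++ s :: post) y ys.
Proof. by rewrite /nest_last !rcons_cat !rcons_cons graft_Leaf_cat. Qed.

Lemma graft_nest_first_xs :
  graft (nest_first (pre ++ Leaf :: post) y ys) (arity_seq pre) s =
  nest_first (pre ++ s :: post) y ys.
Proof.
rewrite /nest_first graft_head; last first.
  by rewrite arity_Node arity_seq_rcons arity_seq_cat arity_seq_cons /=; lia.
by rewrite !rcons_cat !rcons_cons graft_Leaf_cat.
Qed.

Lemma graft_nest_last_y :
  graft (nest_last xs Leaf ys) (arity_seq xs) s = nest_last xs s ys.
Proof. by rewrite /nest_last -!cats1 -[arity_seq xs]addn0 graft_cat. Qed.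

Lemma graft_nest_first_y :
  graft (nest_first xs Leaf ys) (arity_seq xs) s = nest_first xs s ys.
Proof.
rewrite /nest_first graft_head; last by rewrite arity_Node arity_seq_rcons /=; lia.
by rewrite -!cats1 graft_Leaf_cat.
Qed.

Lemma graft_nest_last_ys :
  graft (nest_last xs y (pre ++ Leaf :: post)) (arity_seq xs + (arity y + arity_seq pre)) s =
  nest_last xs y (pre ++ s :: post).
Proof.
rewrite /nest_last -!cats1 graft_cat; last first.
  by rewrite arity_Node arity_seq_cons arity_seq_cat arity_seq_cons /=; lia.
by rewrite -arity_seq_cons -cat_cons graft_Leaf_cat.
Qed.

Lemma graft_nest_first_ys :
  graft (nest_first xs y (pre ++ Leaf :: post)) (arity_seq xs + (arity y + arity_seq pre)) s =
  nest_first xs y (pre ++ s :: post).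
Proof.
rewrite /nest_first (_ : _ + _ = arity_seq (Node (rcons xs y) :: pre)).
  by rewrite -cat_cons graft_Leaf_cat.
by rewrite arity_seq_cons arity_Node arity_seq_rcons addnA.
Qed.

End GraftNest.

Lemma split_node l : has is_node l -> exists pre s post,
  [/\ l = pre ++ s :: post & count is_node l = (count is_node (pre ++ Leaf :: post)).+1].
Proof.
elim: l => [|u l IH] //= /orP[u_node|l_node]; first by exists [::], u, l; rewrite u_node.
have [pre [s [post [-> count_l]]]] := IH l_node.
by exists (u :: pre), s, post; rewrite /= count_l addnS.
Qed.

Lemma count_is_node0 l : count is_node l = 0 -> l = nseq (size l) Leaf.
Proof. by elim: l => [|[|ts] l IH] //= /IH {1}->. Qed.

(* Induction on the number of internal children: grafting them back into the
   corolla instance of the relation on both sides. *)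
Lemma treq_nest xs y ys : 0 < size xs -> 0 < size ys ->
  treq (nest_last xs y ys) (nest_first xs y ys).
Proof.
move: {2}(count is_node _) (leqnn (count is_node (xs ++ y :: ys))) => k.
elim: k xs y ys => [|k IH] xs y ys count_k xs_gt0 ys_gt0.
  move: count_k; rewrite leqn0 count_cat /= => /eqP count0.
  have -> : xs = nseq (size xs) Leaf by apply: count_is_node0; lia.
  have -> : ys = nseq (size ys) Leaf by apply: count_is_node0; lia.
  have -> : y = Leaf by case: y count0 => //=; lia.
  rewrite nest_last_corolla nest_first_corolla -(prednK xs_gt0) -(prednK ys_gt0).
  by apply: treq_rel.
have [|no_node] := boolP (has is_node (xs ++ y :: ys)); last first.
  by apply: IH => //; move: no_node; rewrite has_count; lia.
rewrite has_cat /= => /orP[/split_node[pre [s [post [xs_eq count_xs]]]]|/orP[y_node|]].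
- subst xs; rewrite -graft_nest_last_xs -graft_nest_first_xs; apply: treq_graft.
  + by rewrite arity_nest_last !arity_seq_cat arity_seq_cons /=; lia.
  + apply: IH => //; last by rewrite size_cat addnS.
    by move: count_k; rewrite count_cat count_xs addSn ltnS (count_cat _ (_ ++ _)).
  + exact: treq_refl.
- rewrite -graft_nest_last_y -graft_nest_first_y; apply: treq_graft.
  + by rewrite arity_nest_last /=; lia.
  + by apply: IH => //; move: count_k; rewrite !count_cat /= y_node; lia.
  + exact: treq_refl.
- move=> /split_node[pre [s [post [ys_eq count_ys]]]]; subst ys.
  rewrite -graft_nest_last_ys -graft_nest_first_ys; apply: treq_graft.
  + by rewrite arity_nest_last !arity_seq_cat arity_seq_cons /=; lia.
  + apply: IH => //; last by rewrite size_cat addnS.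
    by move: count_k; rewrite !count_cat /= count_ys; lia.
  + exact: treq_refl.
Qed.

Fixpoint tree_size (t : tree) : nat :=
  if t is Node ts then (sumn (map tree_size ts)).+1 else 1.

Lemma tree_size_gt0 t : 0 < tree_size t. Proof. by case: t. Qed.

Lemma treq_child pre c c' post : treq c c' ->
  treq (Node (pre ++ c :: post)) (Node (pre ++ c' :: post)).
Proof.
move=> c_c'; rewrite -(graft_Leaf_cat c) -(graft_Leaf_cat c').
apply: treq_graft c_c'; last exact: treq_refl.
by rewrite arity_Node arity_seq_cat arity_seq_cons /=; lia.
Qed.

Definition has_nf (t : tree) : Prop := exists t', [/\ nf t', wf t' & treq t t'].

Section NormalForm.
Variable N : nat.
Hypothesis has_nf_small : forall t, tree_size t <= N -> wf t -> has_nf t.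

Lemma normalize_children cs pre : sumn (map tree_size cs) <= N -> all wf cs ->
  exists cs', [/\ size cs' = size cs, all nf cs', all wf cs' &
                 treq (Node (pre ++ cs)) (Node (pre ++ cs'))].
Proof.
elim: cs pre => [|c cs IH] pre; first by exists [::]; split => //; exact: treq_refl.
rewrite [sumn _]/= [all _ _]/= => size_cs /andP[wf_c wf_cs].
have [c' [nf_c' wf_c' c_c']] : has_nf c by apply: has_nf_small wf_c; lia.
have [cs' [size_cs' nf_cs' wf_cs' cs_cs']] := IH (rcons pre c') ltac:(lia) wf_cs.
exists (c' :: cs'); split => /=; [by rewrite size_cs'|by rewrite nf_c'|by rewrite wf_c'|].
apply: treq_trans (treq_child pre cs c_c') _.
by rewrite -!cat_rcons.
Qed.

(* A node whose first child is internal is rotated by [treq_nest], which keeps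
   the size and makes the first child smaller. *)
Lemma has_nf_Node c cs : cs <> [::] -> wf c -> all wf cs ->
  tree_size (Node (c :: cs)) <= N.+1 -> has_nf (Node (c :: cs)).
Proof.
move: {2}(tree_size c) (leqnn (tree_size c)) => M.
elim: M c cs => [|M IH] c cs size_c cs_n0 wf_c wf_cs size_t.
  by have := tree_size_gt0 c; lia.
have cs_gt0 : 0 < size cs by case: cs cs_n0 {wf_cs size_t}.
case: c size_c wf_c size_t => [|ds] size_c wf_c size_t.
  have size_cs : sumn (map tree_size cs) <= N by move: size_t => /=; lia.
  have [cs' [size_cs' nf_cs' wf_cs' cs_cs']] := normalize_children [:: Leaf] size_cs wf_cs.
  have cs'_n0 : cs' <> [::] by move=> cs'0; move: size_cs' cs_gt0; rewrite cs'0 => <-.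
  by exists (Node (Leaf :: cs')); rewrite nf_Node_Leaf ?wf_Node_Leaf.
move: wf_c; rewrite wf_Node => /andP[].
case/lastP: ds size_c size_t => [|ds d] //; rewrite size_rcons.
case: ds => [|d1 ds] // size_c size_t _.
rewrite -cats1 all_cat /= andbT => /andP[/andP[wf_d1 wf_ds] wf_d].
have rot : treq (Node (Node (d1 :: rcons ds d) :: cs)) (Node (d1 :: rcons ds (Node (d :: cs)))).
  by apply: treq_sym; rewrite -!rcons_cons; apply: treq_nest.
have [t' [nf_t' wf_t' t_t']] : has_nf (Node (d1 :: rcons ds (Node (d :: cs)))).
  apply: IH => //.
  - by move: size_c; rewrite /= -cats1 map_cat sumn_cat /=; lia.
  - by case: ds {size_c size_t rot wf_ds}.
  - by rewrite -cats1 all_cat wf_ds /= wf_d wf_cs ltnS cs_gt0.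
  - by move: size_t; rewrite /= -!cats1 !map_cat !sumn_cat /=; lia.
by exists t'; split => //; rewrite cats1; apply: treq_trans rot t_t'.
Qed.

End NormalForm.

Lemma nf_exists t : wf t -> has_nf t.
Proof.
move: {2}(tree_size t) (leqnn (tree_size t)) => N.
elim: N t => [|N IH] t size_t; first by have := tree_size_gt0 t; lia.
case: t size_t => [|[|c [|c2 cs]]] size_t //.
  by exists Leaf; split; last exact: treq_refl.
rewrite wf_Node [all _ _]/= => /andP[_ /andP[wf_c wf_cs]].
exact: (has_nf_Node IH).
Qed.

(** * Noncrossing partitions of intervals *)

Definition partition_on (lo hi : nat) (P : partition_set) : Prop :=
  [/\ forall B, B \in P -> B != fset0,
      forall B C x, B \in P -> C \in P -> x \in B -> x \in C -> B = C &
      forall x, (exists2 B, B \in P & x \in B) <-> lo <= x < hi].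

Definition ncpart (lo hi : nat) (P : partition_set) : Prop :=
  partition_on lo hi P /\ noncrossing P.

Lemma noncrossingP (P : partition_set) :
  (forall B C a b c d, B \in P -> C \in P -> a \in B -> b \in B -> c \in C -> d \in C ->
     a < c -> c < b -> b < d -> B = C) <-> noncrossing P.
Proof.
split=> [nc_eq B C a b c d B_in C_in BC aB bB cC dC|nc B C a b c d B_in C_in aB bB cC dC ac cb bd].
  by apply/and3P => -[ac cb bd]; move/eqP: BC; apply; apply: nc_eq aB bB cC dC ac cb bd.
apply/eqP/negPn/negP => BC.
by move: (nc B C a b c d B_in C_in BC aB bB cC dC); rewrite ac cb bd.
Qed.

Lemma NCP_ncpart n P : 0 < n -> NCP n P <-> ncpart 1 n P.
Proof.
move=> n_gt0; split=> [[_ [ne disj cover] nc]|[[ne same cover] nc]].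
  split=> //; split=> // [B C x B_in C_in xB xC|x]; last by rewrite cover; lia.
  apply/eqP/negPn/negP => BC; have /fsetP/(_ x) := disj B C B_in C_in BC.
  by rewrite in_fset0 in_fsetI xB xC.
split=> //; split=> // [B C B_in C_in BC|x]; last by rewrite cover; lia.
apply/fsetP => x; rewrite in_fsetI in_fset0; apply/negP => /andP[xB xC].
by move/eqP: BC; apply; apply: same xB xC.
Qed.

Lemma partition_on_range lo hi P B x :
  partition_on lo hi P -> B \in P -> x \in B -> lo <= x < hi.
Proof. by move=> [_ _ cover] B_in xB; apply/cover; exists B. Qed.

Lemma partition_on_empty lo P : partition_on lo lo P -> P = fset0.
Proof.
move=> [ne _ cover]; apply/fsetP => B; rewrite in_fset0; apply/negP => B_in.
have /fset0Pn[x xB] := ne B B_in; have : lo <= x < lo by apply/cover; exists B.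
by lia.
Qed.

Lemma ncpart0 lo : ncpart lo lo fset0.
Proof.
split; last by apply/noncrossingP => B; rewrite in_fset0.
by split=> [B|B C x|x]; rewrite ?in_fset0 //; split=> [[B]|]; rewrite ?in_fset0 //; lia.
Qed.

Lemma ncpart1 s : ncpart s s.+1 [fset [fset s]].
Proof.
split; last by apply/noncrossingP => B C a b c d; rewrite !in_fset1 => /eqP-> /eqP->.
split=> [B|B C x|x]; rewrite ?in_fset1.
- by move=> /eqP->; apply/fset0Pn; exists s; rewrite in_fset1.
- by move=> /eqP-> /eqP->.
split=> [[B]|]; first by rewrite in_fset1 => /eqP->; rewrite in_fset1 => /eqP->; lia.
by move=> x_s; exists [fset s]; rewrite !in_fset1 // eqn_leq; lia.
Qed.

Lemma ncpart_cat a b c P Q : a <= b <= c ->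
  ncpart a b P -> ncpart b c Q -> ncpart a c (P `|` Q).
Proof.
move=> /andP[ab bc] [P_part /noncrossingP ncP] [Q_part /noncrossingP ncQ].
have [neP sameP coverP] := P_part; have [neQ sameQ coverQ] := Q_part.
have rangeP B x : B \in P -> x \in B -> a <= x < b by apply: partition_on_range.
have rangeQ B x : B \in Q -> x \in B -> b <= x < c by apply: partition_on_range.
split.
  split=> [B|B C x|x]; rewrite ?in_fsetU.
  - by case/orP; [apply: neP|apply: neQ].
  - case/orP=> [B_in|B_in] /orP[C_in|C_in] xB xC.
    + exact: sameP xB xC.
    + by have := rangeP _ _ B_in xB; have := rangeQ _ _ C_in xC; lia.
    + by have := rangeQ _ _ B_in xB; have := rangeP _ _ C_in xC; lia.
    + exact: sameQ xB xC.
  split=> [[B]|x_in]; rewrite ?in_fsetU.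
    by case/orP=> [B_in /(rangeP _ _ B_in)|B_in /(rangeQ _ _ B_in)]; lia.
  have [x_b|x_b] := ltnP x b.
    have [B B_in xB] : exists2 B, B \in P & x \in B by apply/coverP; lia.
    by exists B; rewrite ?in_fsetU ?B_in.
  have [B B_in xB] : exists2 B, B \in Q & x \in B by apply/coverQ; lia.
  by exists B; rewrite ?in_fsetU ?B_in ?orbT.
apply/noncrossingP => B C a' b' c' d'; rewrite !in_fsetU.
case/orP=> [B_in|B_in] /orP[C_in|C_in] aB bB cC dC ac cb bd.
- exact: ncP aB bB cC dC ac cb bd.
- by have := rangeP _ _ B_in bB; have := rangeQ _ _ C_in cC; lia.
- by have := rangeQ _ _ B_in aB; have := rangeP _ _ C_in cC; lia.
- exact: ncQ aB bB cC dC ac cb bd.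
Qed.

Section AddMin.
Variables (s e m : nat) (R : {fset nat}) (Q : partition_set).
Hypothesis RQ_part : partition_on s.+1 e (R |` Q).
Hypothesis mR : m \in R.
Hypothesis m_notin_Q : forall B, B \in Q -> m \notin B.

Let R_in : R \in R |` Q := fset1U1 R Q.
Let Q_in B : B \in Q -> B \in R |` Q := @fset1Ur _ B R Q.
Let range B x : B \in R |` Q -> x \in B -> s < x < e.
Proof. by move=> B_in xB; apply: partition_on_range RQ_part B_in xB. Qed.

Let R_Q_disjoint B x : B \in Q -> x \in R -> x \in B -> False.
Proof.
have [_ same _] := RQ_part; move=> B_in xR xB.
by move: (m_notin_Q B_in); rewrite -(same _ _ _ R_in (Q_in B_in) xR xB) mR.
Qed.

Let in_R x : x \in s |` R -> s < x -> x \in R.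
Proof. by rewrite in_fset1U => /orP[/eqP->|//]; rewrite ltnn. Qed.

Lemma partition_on_add_min : partition_on s e ((s |` R) |` Q).
Proof.
have [ne same cover] := RQ_part; have m_range := range R_in mR.
split=> [B|B C x|x]; rewrite ?in_fset1U.
- case/orP => [/eqP->|B_in]; last exact/ne/Q_in.
  by apply/fset0Pn; exists s; rewrite in_fset1U eqxx.
- case/orP => [/eqP->|B_in] /orP[/eqP->|C_in] // xB xC.
  + by case: (R_Q_disjoint C_in (in_R xB _) xC); have := range (Q_in C_in) xC; lia.
  + by case: (R_Q_disjoint B_in (in_R xC _) xB); have := range (Q_in B_in) xB; lia.
  + exact: same (Q_in B_in) (Q_in C_in) xB xC.
split=> [[B]|x_in].
  rewrite in_fset1U => /orP[/eqP->|B_in /(range (Q_in B_in))]; last by lia.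
  by rewrite in_fset1U => /orP[/eqP->|/(range R_in)]; lia.
have [->|x_s] := eqVneq x s; first by exists (s |` R); rewrite !in_fset1U eqxx.
have [B B_in xB] : exists2 B, B \in R |` Q & x \in B by apply/cover; lia.
move: B_in; rewrite in_fset1U => /orP[/eqP BR|B_in].
  by exists (s |` R); rewrite !in_fset1U ?eqxx // -BR xB orbT.
by exists B; rewrite ?in_fset1U ?B_in ?orbT.
Qed.

(* Arcs from [s] to [R] cannot cross a block of [Q], which lies on one side of
   [m = min R]. *)
Lemma noncrossing_add_min : noncrossing (R |` Q) -> {in R, forall x, m <= x} ->
  (forall B, B \in Q -> {in B, forall x, x < m} \/ {in B, forall x, m < x}) ->
  noncrossing ((s |` R) |` Q).
Proof.
move=> /noncrossingP nc R_ge Q_sides; apply/noncrossingP => B C a b c d.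
rewrite !in_fset1U; case/orP=> [/eqP->|B_in] /orP[/eqP->|C_in] // aB bB cC dC ac cb bd.
- have a_ge : s <= a by move: aB; rewrite in_fset1U => /orP[/eqP->|/(range R_in)]; lia.
  have bR : b \in R by apply: in_R bB _; lia.
  case: (Q_sides _ C_in) => [C_lt|C_gt]; first by have := C_lt _ dC; have := R_ge _ bR; lia.
  have RC := nc _ _ m b c d R_in (Q_in C_in) mR bR cC dC (C_gt _ cC) cb bd.
  by case: (R_Q_disjoint C_in mR); rewrite -RC.
- have a_gt := range (Q_in B_in) aB.
  have cR : c \in R by apply: in_R cC _; lia.
  have dR : d \in R by apply: in_R dC _; lia.
  have BR := nc _ _ a b c d (Q_in B_in) R_in aB bB cR dR ac cb bd.
  by case: (R_Q_disjoint B_in cR); rewrite BR.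
- exact: nc (Q_in B_in) (Q_in C_in) aB bB cC dC ac cb bd.
Qed.

End AddMin.

Lemma ncpart_add_min s e m R Q :
  ncpart s.+1 e (R |` Q) -> m \in R -> {in R, forall x, m <= x} ->
  (forall B, B \in Q -> {in B, forall x, x < m} \/ {in B, forall x, m < x}) ->
  ncpart s e ((s |` R) |` Q).
Proof.
move=> [RQ_part nc] mR R_ge Q_sides.
have m_notin_Q B : B \in Q -> m \notin B.
  by case/Q_sides => side; apply/negP => /side; rewrite ltnn.
split; [exact: partition_on_add_min mR _|exact: noncrossing_add_min RQ_part mR _ nc R_ge Q_sides].
Qed.

Definition rooted_part (cs : seq tree) (s : nat) : partition_set :=
  block (s :: seams cs s) |` forest_part cs s.

Lemma tree_part_Node_Leaf cs o : cs <> [::] ->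
  tree_part (Node (Leaf :: cs)) o = rooted_part cs o.+1.
Proof. by move=> cs_n0; rewrite tree_part_Node seams_cons //= fset0U addn1. Qed.

Lemma rooted_part1 c s : rooted_part [:: c] s = [fset s] |` tree_part c s.
Proof. by rewrite /rooted_part /= fsetU0 block1. Qed.

Lemma rooted_part_cons c cs s : cs <> [::] ->
  rooted_part (c :: cs) s =
  (s |` block ((s + arity c) :: seams cs (s + arity c)))
    |` (tree_part c s `|` forest_part cs (s + arity c)).
Proof. by move=> cs_n0; rewrite /rooted_part seams_cons // block_cons. Qed.

Section RootedPart.
Variable cs : seq tree.
Hypothesis ncpart_cs :
  all_prop (fun t => forall o, nf t -> wf t -> ncpart o.+1 (o + arity t) (tree_part t o)) cs.

Lemma ncpart_rooted_part_rec s : cs <> [::] -> all nf cs -> all wf cs ->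
  ncpart s (s + arity_seq cs) (rooted_part cs s).
Proof.
elim: cs ncpart_cs s => [|c cs' IH] // [ncpart_c ncpart_cs'] s _.
rewrite [all _ _]/= [all wf _]/= => /andP[nf_c nf_cs'] /andP[wf_c wf_cs'].
have c_gt0 := arity_gt0 wf_c; have part_c := ncpart_c s nf_c wf_c.
case: cs' IH ncpart_cs' nf_cs' wf_cs' => [|c2 cs2] IH ncpart_cs' nf_cs' wf_cs'.
  rewrite rooted_part1 (_ : arity_seq [:: c] = arity c); last exact: addn0.
  by apply: ncpart_cat (ncpart1 s) part_c; lia.
set m := s + arity c.
rewrite rooted_part_cons // arity_seq_cons addnA -/m.
have part_cs : ncpart m (m + arity_seq (c2 :: cs2)) (rooted_part (c2 :: cs2) m).
  by apply: IH.
apply: (ncpart_add_min (m := m)).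
- rewrite fsetUCA; apply: ncpart_cat part_c part_cs.
  by case/andP: wf_cs' => /arity_gt0; lia.
- by rewrite in_block mem_head.
- move=> x; rewrite in_block inE => /orP[/eqP->|/(seams_range wf_cs')] //; lia.
move=> B; rewrite in_fsetU => /orP[/(tree_part_range wf_c)|/(forest_part_range wf_cs')] [_ B_range].
  by left => x /B_range; lia.
by right => x /B_range; lia.
Qed.

End RootedPart.

Lemma ncpart_tree_part t o : nf t -> wf t -> ncpart o.+1 (o + arity t) (tree_part t o).
Proof.
elim/tree_nested_ind: t o => [|ts IH] o; first by rewrite addn1 => _ _; apply: ncpart0.
move=> /nf_NodeP[cs [ts_eq cs_n0 nf_cs]]; subst ts; case: IH => _ IH.
rewrite wf_Node_Leaf // => wf_cs.
rewrite tree_part_Node_Leaf // arity_Node arity_seq_cons add1n -addSnnS.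
exact: ncpart_rooted_part_rec.
Qed.

Lemma ncpart_rooted_part cs s : cs <> [::] -> all nf cs -> all wf cs ->
  ncpart s (s + arity_seq cs) (rooted_part cs s).
Proof.
apply: ncpart_rooted_part_rec.
by elim: cs => //= c cs IH; split=> // o; apply: ncpart_tree_part.
Qed.

(** * Injectivity on normal forms *)

Lemma rooted_part_root cs s B : all wf cs -> B \in rooted_part cs s -> s \in B ->
  B = block (s :: seams cs s).
Proof.
move=> wf_cs; rewrite in_fset1U => /orP[/eqP //|/(forest_part_range wf_cs)[_ B_range]].
by move/B_range; lia.
Qed.

Lemma root_block_next c cs c' cs' s : wf c -> all wf cs' -> cs <> [::] ->
  block (s :: seams (c :: cs) s) = block (s :: seams (c' :: cs') s) ->
  cs' <> [::] /\ arity c' <= arity c.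
Proof.
move=> /arity_gt0 c_gt0 wf_cs' cs_n0 root_eq.
have : s + arity c \in block (s :: seams (c :: cs) s).
  by rewrite in_block (seams_cons c) // !inE eqxx orbT.
rewrite root_eq in_block inE => /orP[/eqP|]; first by lia.
case: cs' wf_cs' {root_eq} => [|c2 cs2] wf_cs' //.
by rewrite (seams_cons c') // inE => /orP[/eqP|/(seams_range wf_cs')]; split=> //; lia.
Qed.

Lemma arity_first_child c cs c' cs' s : wf c -> wf c' -> all wf cs -> all wf cs' ->
  arity_seq (c :: cs) = arity_seq (c' :: cs') ->
  block (s :: seams (c :: cs) s) = block (s :: seams (c' :: cs') s) -> arity c = arity c'.
Proof.
move=> wf_c wf_c' wf_cs wf_cs' arity_eq root_eq.
case: cs wf_cs arity_eq root_eq => [|c2 cs2] wf_cs arity_eq root_eq.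
  case: cs' wf_cs' arity_eq root_eq => [|c2' cs2'] wf_cs' arity_eq root_eq.
    by move: arity_eq; rewrite !arity_seq_cons /arity_seq /= !addn0.
  have cs'_n0 : c2' :: cs2' <> [::] by [].
  by have [] := root_block_next wf_c' wf_cs cs'_n0 (esym root_eq).
have cs_n0 : c2 :: cs2 <> [::] by [].
have [cs'_n0 le1] := root_block_next wf_c wf_cs' cs_n0 root_eq.
have [_ le2] := root_block_next wf_c' wf_cs cs'_n0 (esym root_eq).
by apply/eqP; rewrite eqn_leq le1 le2.
Qed.

Lemma arity_seq_eq0 cs : all wf cs -> arity_seq cs = 0 -> cs = [::].
Proof. by case: cs => // c cs /andP[/arity_gt0 c_gt0 _]; rewrite arity_seq_cons; lia. Qed.

Lemma mem_rooted_part_cons c cs s B :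
  (B \in rooted_part (c :: cs) s) =
  [|| B == block (s :: seams (c :: cs) s), B \in tree_part c s
    | B \in forest_part cs (s + arity c)].
Proof. by rewrite in_fset1U [forest_part _ _]/= in_fsetU. Qed.

Lemma mem_tree_part_first_child c cs s B : wf c -> all wf cs ->
  (B \in tree_part c s) =
  [&& B \in rooted_part (c :: cs) s, s \notin B & all (fun x => x < s + arity c) B].
Proof.
move=> wf_c wf_cs; rewrite mem_rooted_part_cons; apply/idP/idP => [B_in|].
  have [_ B_range] := tree_part_range wf_c B_in.
  rewrite B_in orbT /=; apply/andP; split; first by apply/negP => /B_range; lia.
  by apply/allP => x /B_range; lia.
case/and3P => /or3P[/eqP->|//|B_in] s_B B_lt; first by rewrite in_block mem_head in s_B.
have [/fset0Pn[x xB] B_range] := forest_part_range wf_cs B_in.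
by have := B_range x xB; have := allP B_lt x xB; lia.
Qed.

Lemma mem_rooted_part_tail c cs s B : wf c -> all wf cs -> cs <> [::] ->
  (B \in rooted_part cs (s + arity c)) =
  (B == block (s :: seams (c :: cs) s) `\ s)
    || (B \in rooted_part (c :: cs) s) && all (fun x => s + arity c < x) B.
Proof.
move=> wf_c wf_cs cs_n0; have c_gt0 := arity_gt0 wf_c.
rewrite (seams_cons c) // block_cons fsetU1K; last first.
  rewrite in_block inE negb_or; apply/andP; split; first by apply/eqP; lia.
  by apply/negP => /(seams_range wf_cs); lia.
rewrite in_fset1U mem_rooted_part_cons; congr (_ || _); apply/idP/idP => [B_in|].
  have [_ B_range] := forest_part_range wf_cs B_in.
  by rewrite B_in !orbT; apply/allP => x /B_range; lia.
case/andP => /or3P[/eqP->|B_in|//] /allP B_gt.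
  by have := B_gt s; rewrite in_block mem_head => /(_ isT); lia.
have [/fset0Pn[x xB] B_range] := tree_part_range wf_c B_in.
by have := B_range x xB; have := B_gt x xB; lia.
Qed.

Section RootedPartInj.
Variable cs : seq tree.
Hypothesis tree_part_inj_cs : all_prop (fun t => forall t' o,
  nf t -> wf t -> nf t' -> wf t' -> arity t = arity t' -> tree_part t o = tree_part t' o -> t = t') cs.

Lemma rooted_part_inj_rec cs' s : all nf cs -> all wf cs -> all nf cs' -> all wf cs' ->
  arity_seq cs = arity_seq cs' -> rooted_part cs s = rooted_part cs' s -> cs = cs'.
Proof.
elim: cs tree_part_inj_cs cs' s => [|c cs1 IH] inj [|c' cs1'] s //.
- by move=> _ _ _ wf_cs' /esym /(arity_seq_eq0 wf_cs').
- by move=> _ wf_cs _ _ /(arity_seq_eq0 wf_cs).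
case: inj => inj_c inj_cs1.
rewrite [all nf _]/= [all wf (c :: _)]/= [all nf (c' :: _)]/= [all wf (c' :: _)]/=.
move=> /andP[nf_c nf_cs1] /andP[wf_c wf_cs1] /andP[nf_c' nf_cs1'] /andP[wf_c' wf_cs1'].
move=> arity_eq part_eq.
have root_eq : block (s :: seams (c :: cs1) s) = block (s :: seams (c' :: cs1') s).
  apply: rooted_part_root; first by rewrite /= wf_c' wf_cs1'.
    by rewrite -part_eq in_fset1U eqxx.
  by rewrite in_block mem_head.
have arity_c := arity_first_child wf_c wf_c' wf_cs1 wf_cs1' arity_eq root_eq.
have c_eq : c = c'.
  apply: (inj_c c' s) => //.
  apply/fsetP => B.
  by rewrite (mem_tree_part_first_child _ _ wf_c wf_cs1) (mem_tree_part_first_child _ _ wf_c' wf_cs1') part_eq arity_c.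
subst c'; congr (_ :: _).
have arity_eq1 : arity_seq cs1 = arity_seq cs1' by move: arity_eq; rewrite !arity_seq_cons; lia.
have [cs1_0|cs1_n0] : cs1 = [::] \/ cs1 <> [::] by case: (cs1) => [|? ?]; [left|right].
  by rewrite cs1_0 (arity_seq_eq0 wf_cs1') // -arity_eq1 cs1_0.
have cs1'_n0 : cs1' <> [::] by move=> cs1'_0; apply/cs1_n0/(arity_seq_eq0 wf_cs1); rewrite arity_eq1 cs1'_0.
apply: (IH inj_cs1 _ (s + arity c)) => //.
apply/fsetP => B.
by rewrite (mem_rooted_part_tail _ _ wf_c wf_cs1) // (mem_rooted_part_tail _ _ wf_c wf_cs1') // part_eq root_eq.
Qed.

End RootedPartInj.

Lemma tree_part_inj t t' o : nf t -> wf t -> nf t' -> wf t' ->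
  arity t = arity t' -> tree_part t o = tree_part t' o -> t = t'.
Proof.
elim/tree_nested_ind: t t' o => [|ts IH] [|ts'] o //.
- by move=> _ _ _ /arity_Node_gt1 + /esym arity_eq; rewrite arity_eq.
- by move=> _ /arity_Node_gt1 + _ _ arity_eq; rewrite arity_eq.
move=> /nf_NodeP[cs [ts_eq cs_n0 nf_cs]] + /nf_NodeP[cs' [ts'_eq cs'_n0 nf_cs']].
subst ts ts'; case: IH => _ IH; rewrite !wf_Node_Leaf // => wf_cs wf_cs' arity_eq part_eq.
congr (Node (Leaf :: _)); apply: (rooted_part_inj_rec IH (s := o.+1)) => //.
  by move: arity_eq; rewrite !arity_Node !arity_seq_cons; lia.
by rewrite -!tree_part_Node_Leaf.
Qed.

(** * Surjectivity onto noncrossing partitions *)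

Lemma partition_on_sub_eq lo hi P Q :
  partition_on lo hi P -> partition_on lo hi Q -> Q `<=` P -> Q = P.
Proof.
move=> [neP sameP coverP] [_ _ coverQ] QP; apply/eqP; rewrite eqEfsubset QP /=.
apply/fsubsetP => B B_in; have /fset0Pn[x xB] := neP B B_in.
have [C C_in xC] : exists2 C, C \in Q & x \in C by apply/coverQ/coverP; exists B.
by rewrite (sameP B C x) // (fsubsetP QP).
Qed.

Definition restrict (l h : nat) (P : partition_set) : partition_set :=
  [fset B in P | all (fun x => l <= x < h) B].

Lemma mem_restrict l h P B :
  (B \in restrict l h P) = (B \in P) && all (fun x => l <= x < h) B.
Proof. by rewrite !inE. Qed.

Lemma ncpart_restrict lo hi l h P : ncpart lo hi P -> lo <= l -> h <= hi ->
  (forall C x y, C \in P -> x \in C -> y \in C -> (l <= x < h) = (l <= y < h)) ->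
  ncpart l h (restrict l h P).
Proof.
move=> [[ne same cover] nc] lo_l h_hi C_inside; split; last first.
  move/noncrossingP: nc => nc; apply/noncrossingP => B C a b c d.
  by rewrite !mem_restrict => /andP[B_in _] /andP[C_in _]; apply: nc.
split=> [B|B C x|x]; rewrite ?mem_restrict.
- by case/andP => /ne.
- by move=> /andP[B_in _] /andP[C_in _]; apply: same.
split=> [[B]|x_in]; first by rewrite mem_restrict => /andP[_ /allP B_in] /B_in.
have [C C_in xC] : exists2 C, C \in P & x \in C by apply/cover; lia.
by exists C; rewrite // mem_restrict C_in; apply/allP => y yC; rewrite -(C_inside C x).
Qed.

Lemma ncpart_split lo m hi P : ncpart lo hi P -> lo <= m <= hi ->
  (forall C x y, C \in P -> x \in C -> y \in C -> (x < m) = (y < m)) ->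
  ncpart lo m (restrict lo m P) /\ ncpart m hi (restrict m hi P).
Proof.
move=> P_nc /andP[lo_m m_hi] same_side; have range := partition_on_range P_nc.1.
split; apply: ncpart_restrict P_nc _ _ _ => // C x y C_in xC yC;
  have /andP[lo_x x_hi] := range _ _ C_in xC; have /andP[lo_y y_hi] := range _ _ C_in yC.
  by rewrite lo_x lo_y (same_side C x y).
by rewrite x_hi y_hi !andbT (leqNgt m x) (leqNgt m y) (same_side C x y).
Qed.

Definition drop_elem (s : nat) (P : partition_set) : partition_set :=
  [fset B `\ s | B in P] `\ fset0.

Lemma mem_drop_elem s P C :
  C \in drop_elem s P <-> C != fset0 /\ exists2 B, B \in P & C = B `\ s.
Proof.
rewrite in_fsetD in_fset1; split=> [/andP[C_n0 /imfsetP[B B_in C_eq]]|[C_n0 [B B_in C_eq]]].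
  by split=> //; exists B.
by rewrite C_n0; apply/imfsetP; exists B.
Qed.

Lemma mem_drop_elem_other lo hi s P R C : partition_on lo hi P -> R \in P -> s \in R ->
  C \in drop_elem s P -> C != R `\ s -> C \in P.
Proof.
move=> [_ same _] R_in sR /mem_drop_elem[_ [B B_in ->]] BR.
have sB : s \notin B by apply: contra BR => sB; rewrite (same B R s).
by rewrite mem_fsetD1.
Qed.

Lemma ncpart_drop_elem s e P : ncpart s e P -> ncpart s.+1 e (drop_elem s P).
Proof.
move=> [[ne same cover] /noncrossingP nc]; split; last first.
  apply/noncrossingP => C1 C2 a b c d.
  move=> /mem_drop_elem[_ [B1 B1_in ->]] /mem_drop_elem[_ [B2 B2_in ->]].
  rewrite !in_fsetD1 => /andP[_ aB] /andP[_ bB] /andP[_ cB] /andP[_ dB] ac cb bd.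
  by rewrite (nc B1 B2 a b c d).
split=> [C /mem_drop_elem[]|C1 C2 x|x] //.
  move=> /mem_drop_elem[_ [B1 B1_in ->]] /mem_drop_elem[_ [B2 B2_in ->]].
  by rewrite !in_fsetD1 => /andP[_ xB1] /andP[_ xB2]; rewrite (same B1 B2 x).
split=> [[C /mem_drop_elem[_ [B B_in ->]]]|x_in].
  rewrite in_fsetD1 => /andP[/eqP x_s xB].
  have : s <= x < e by apply/cover; exists B.
  lia.
have [B B_in xB] : exists2 B, B \in P & x \in B by apply/cover; lia.
have xBs : x \in B `\ s by rewrite in_fsetD1 xB andbT; apply/eqP; lia.
exists (B `\ s) => //; apply/mem_drop_elem; split; last by exists B.
by apply/fset0Pn; exists x.
Qed.

(* By noncrossing, no block other than [R] can straddle [r], the successor of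
   [s] in [R]. *)
Lemma drop_elem_same_side s e P R r : ncpart s e P -> R \in P -> s \in R -> r \in R ->
  s < r -> {in R, forall x, s < x -> r <= x} ->
  forall C x y, C \in drop_elem s P -> x \in C -> y \in C -> (x < r) = (y < r).
Proof.
move=> [[_ same cover] /noncrossingP nc] R_in sR rR s_r r_min.
have range B x : B \in P -> x \in B -> s <= x < e by move=> *; apply/cover; exists B.
have below C x y : C \in P -> C != R -> x \in C -> y \in C -> x < r -> y < r.
  move=> C_in CR xC yC x_r; rewrite ltnNge leq_eqVlt; apply/negP => /orP[/eqP r_y|r_y].
    by subst y; move/eqP: CR; apply; apply: same yC rR.
  have s_x : s < x.
    rewrite ltn_neqAle (proj1 (andP (range _ _ C_in xC))) andbT.
    by apply: contra CR => /eqP x_s; subst x; rewrite (same C R s).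
  by move/eqP: CR; apply; symmetry; apply: nc R_in C_in sR rR xC yC s_x x_r r_y.
move=> C x y /mem_drop_elem[_ [B B_in ->]]; rewrite !in_fsetD1 => /andP[x_s xB] /andP[y_s yB].
have [BR|BR] := eqVneq B R; last by apply/idP/idP; [apply: below xB yB|apply: below yB xB].
subst B; have := range _ _ R_in xB; have := range _ _ R_in yB.
have := r_min x xB; have := r_min y yB; move: x_s y_s => /eqP x_s /eqP y_s; lia.
Qed.

Lemma rooted_part1_eq c s e P : ncpart s e P -> [fset s] \in P ->
  nf c -> wf c -> s + arity c = e -> tree_part c s = drop_elem s P ->
  rooted_part [:: c] s = P.
Proof.
move=> [P_part _] sP nf_c wf_c arity_c part_c.
have [c_part _] : ncpart s e (rooted_part [:: c] s).
  rewrite -arity_c -[arity c]addn0; apply: ncpart_rooted_part => //=; rewrite ?nf_c ?wf_c //.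
apply: (partition_on_sub_eq P_part c_part); apply/fsubsetP => B.
rewrite rooted_part1 in_fset1U => /orP[/eqP-> //|]; rewrite part_c => B_in.
have [B_n0 _] := (mem_drop_elem _ _ _).1 B_in.
by apply: (mem_drop_elem_other P_part sP _ B_in); rewrite ?in_fset1 // fsetDv.
Qed.

Lemma rooted_part_cons_eq c cs s r e P R :
  ncpart s e P -> R \in P -> s \in R -> r \in R ->
  nf c -> wf c -> s + arity c = r -> tree_part c s = restrict s.+1 r (drop_elem s P) ->
  cs <> [::] -> all nf cs -> all wf cs -> r + arity_seq cs = e ->
  rooted_part cs r = restrict r e (drop_elem s P) ->
  rooted_part (c :: cs) s = P.
Proof.
move=> [P_part _] R_in sR rR nf_c wf_c arity_c part_c cs_n0 nf_cs wf_cs arity_cs part_cs.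
have [cs_part _] : ncpart s e (rooted_part (c :: cs) s).
  by rewrite -arity_cs -arity_c -addnA; apply: ncpart_rooted_part => //=; apply/andP.
have s_r : s < r by rewrite -arity_c -addn1 leq_add2l arity_gt0.
have rRs : r \in R `\ s by rewrite in_fsetD1 rR andbT; apply/eqP; lia.
have in_drop B : B \in restrict r e (drop_elem s P) -> B \in drop_elem s P.
  by rewrite mem_restrict => /andP[].
have root_cs : block (r :: seams cs r) = R `\ s.
  have : block (r :: seams cs r) \in drop_elem s P by apply: in_drop; rewrite -part_cs fset1U1.
  move=> /mem_drop_elem[_ [B B_in B_eq]]; have [_ sameP _] := P_part.
  have : r \in B `\ s by rewrite -B_eq in_block mem_head.
  rewrite in_fsetD1 => /andP[_ rB].
  by rewrite B_eq (sameP B R r).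
apply: (partition_on_sub_eq P_part cs_part); apply/fsubsetP => B.
rewrite mem_rooted_part_cons => /or3P[/eqP->|B_in|B_in].
- by rewrite (seams_cons c) // block_cons arity_c root_cs fsetD1K.
- move: B_in; rewrite part_c mem_restrict => /andP[B_in /allP B_lt].
  apply: mem_drop_elem_other P_part R_in sR B_in _.
  by apply: contraTneq rRs => <-; apply/negP => /B_lt; rewrite ltnn andbF.
- have [_ B_gt] := forest_part_range wf_cs B_in; rewrite arity_c in B_in B_gt.
  have : B \in rooted_part cs r by rewrite in_fset1U B_in orbT.
  rewrite part_cs => /in_drop B_in'; apply: mem_drop_elem_other P_part R_in sR B_in' _.
  by apply: contraTneq rRs => <-; apply/negP => /B_gt; rewrite ltnn.
Qed.

Definition rooted_part_surj_upto (N : nat) : Prop :=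
  forall s e P, e - s <= N -> s < e -> ncpart s e P ->
  exists cs, [/\ cs <> [::], all nf cs, all wf cs, s + arity_seq cs = e & rooted_part cs s = P].

Lemma tree_part_surj_upto N : rooted_part_surj_upto N -> forall o a P, 0 < a -> a <= N.+1 ->
  ncpart o.+1 (o + a) P -> exists t, [/\ nf t, wf t, arity t = a & tree_part t o = P].
Proof.
move=> surj o a P a_gt0 a_le P_nc.
have [a1|a_gt1] := leqP a 1.
  have a_eq : a = 1 by lia.
  by subst a; exists Leaf; move: P_nc; rewrite addn1 => -[/partition_on_empty->].
have [cs [cs_n0 nf_cs wf_cs arity_cs <-]] := surj o.+1 (o + a) P ltac:(lia) ltac:(lia) P_nc.
exists (Node (Leaf :: cs)).
rewrite nf_Node_Leaf // wf_Node_Leaf // tree_part_Node_Leaf // arity_Node arity_seq_cons.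
by split=> //=; lia.
Qed.

Lemma rooted_part_surj N : rooted_part_surj_upto N.
Proof.
elim: N => [|N IH] s e P e_s s_e P_nc; first by lia.
have tree_surj := tree_part_surj_upto IH.
have [[_ same cover] _] := P_nc.
have [R R_in sR] : exists2 R, R \in P & s \in R by apply/cover; lia.
have drop_nc := ncpart_drop_elem P_nc.
have [R_s|/fset0Pn[x xR]] := eqVneq (R `\ s) fset0.
  have R_eq : R = [fset s] by rewrite -(fsetD1K sR) R_s fsetU0.
  have drop_nc' : ncpart s.+1 (s + (e - s)) (drop_elem s P) by rewrite subnKC // ltnW.
  have [c [nf_c wf_c arity_c part_c]] := tree_surj s (e - s) _ ltac:(lia) ltac:(lia) drop_nc'.
  exists [:: c]; split=> //=; rewrite ?nf_c ?wf_c ?arity_seq_cons ?addn0 ?arity_c; try lia.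
  by apply: rooted_part1_eq P_nc _ nf_c wf_c _ part_c; rewrite -?R_eq //; lia.
case: (ex_minnP (ex_intro (fun x => x \in R `\ s) x xR)) => r.
rewrite in_fsetD1 => /andP[/eqP r_s rR] r_min.
have /andP[s_r r_e] : s < r < e.
  have : s <= r < e by apply/cover; exists R.
  lia.
have same_side := drop_elem_same_side P_nc R_in sR rR s_r
  (fun x xR sx => r_min x (ltac:(by rewrite in_fsetD1 xR andbT; apply/eqP; lia))).
have [part1 part2] := ncpart_split drop_nc (ltac:(lia) : s.+1 <= r <= e) same_side.
have part1' : ncpart s.+1 (s + (r - s)) (restrict s.+1 r (drop_elem s P)).
  by rewrite subnKC // ltnW.
have [c [nf_c wf_c arity_c part_c]] := tree_surj s (r - s) _ ltac:(lia) ltac:(lia) part1'.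
have [cs [cs_n0 nf_cs wf_cs arity_cs part_cs]] := IH r e _ ltac:(lia) r_e part2.
exists (c :: cs); split=> //=; rewrite ?nf_c ?wf_c ?arity_seq_cons //; first by lia.
by apply: rooted_part_cons_eq P_nc R_in sR rR nf_c wf_c _ part_c cs_n0 nf_cs wf_cs arity_cs part_cs; lia.
Qed.

Theorem mainTheorem1 :
  (* eval is a morphism of operads from the free operad into NCP sending q_n to p_n *)
  (forall t, wf t -> NCP (arity t) (eval t)) /\
  eval Leaf = fset0 /\
  (forall n, 2 <= n -> eval (corolla n) = pgen n) /\
  (forall t s j, wf t -> wf s -> j < arity t ->
     eval (graft t j s) = ncomp j.+1 (arity s) (eval t) (eval s)) /\
  (* it factors through the quotient Q by the relations *)
  (forall t t', wf t -> wf t' -> treq t t' -> eval t = eval t') /\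
  (* the induced morphism Q -> NCP is injective in each arity ... *)
  (forall t t', wf t -> wf t' -> arity t = arity t' ->
     eval t = eval t' -> treq t t') /\
  (* ... and surjective in each arity *)
  (forall n P, NCP n P -> exists t, [/\ wf t, arity t = n & eval t = P]).
Proof.
split.
  move=> t wf_t; have [u [nf_u wf_u t_u]] := nf_exists wf_t.
  rewrite (eval_treq t_u wf_t) eval_tree_part // (treq_arity_wf t_u).1.
  by apply/NCP_ncpart; [exact: arity_gt0 | exact: ncpart_tree_part].
split=> //; split=> [n n2|]; first exact: eval_corolla.
split=> [t s j|]; first exact: eval_graft.
split=> [t t' wf_t _ t_t'|]; first exact: eval_treq.
split=> [t t' wf_t wf_t' arity_eq eval_eq|n P P_NCP].
  have [u [nf_u wf_u t_u]] := nf_exists wf_t; have [u' [nf_u' wf_u' t'_u']] := nf_exists wf_t'.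
  suff u_eq : u = u' by apply: treq_trans t_u _; rewrite u_eq; apply: treq_sym.
  apply: (tree_part_inj (o := 0)) => //.
    by rewrite -(treq_arity_wf t_u).1 -(treq_arity_wf t'_u').1.
  by rewrite -!eval_tree_part // -(eval_treq t_u wf_t) -(eval_treq t'_u' wf_t').
have n_gt0 : 0 < n by case: P_NCP.
have [t [_ wf_t arity_t part_t]] :=
  tree_part_surj_upto (@rooted_part_surj n) (o := 0) n_gt0 (leqnSn n) ((NCP_ncpart P n_gt0).1 P_NCP).
by exists t; rewrite eval_tree_part.
Qed.
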